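(* Let $f,g\in\mathbb{R}[x_1,\dots,x_n]$ be forms, where $f$ is nonconstant with strictly positive coefficients and $g(x)>0$ for all $x\in\mathbb{R}_+^n\setminus\{0\}$. If $\deg(f)$ divides $\deg(g)$, then there exists an integer $m\ge1$ such that all coefficients of $f^mg$ are nonnegative.
   Context: A form is a homogeneous polynomial. A form $f=\sum_{|w|=d}a_wx^w$ of degree $d$ has strictly positive coefficients if $a_w>0$ for every $w\in\mathbb{Z}_{\ge0}^n$ with $|w|=d$. $\mathbb{R}_+^n=\{x\in\mathbb{R}^n: x_i\ge0\ \forall i\}$. *)

From Stdlib Require Import Reals Lra Lia List Arith.
Import ListNotations.
Open Scope R_scope.

(* A polynomial in n variables is represented as a finite list of terms
   (c, w): coefficient c times the monomial x^w, w an exponent vector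
   (a list of naturals of length n).  Repeated exponents are allowed;
   the coefficient of x^w is the sum of all c with exponent w. *)
Definition expo := list nat.
Definition rpoly := list (R * expo).

Definition expo_deg (w : expo) : nat := fold_right Nat.add 0%nat w.

Definition coef (p : rpoly) (w : expo) : R :=
  fold_right (fun t acc =>
    (if list_eq_dec Nat.eq_dec (snd t) w then fst t else 0) + acc) 0 p.

Fixpoint mono_eval (w : expo) (x : list R) : R :=
  match w, x with
  | a :: w', b :: x' => b ^ a * mono_eval w' x'
  | _, _ => 1
  end.

Definition eval (p : rpoly) (x : list R) : R :=
  fold_right (fun t acc => fst t * mono_eval (snd t) x + acc) 0 p.

Fixpoint expo_add (v w : expo) : expo :=
  match v, w with
  | a :: v', b :: w' => (a + b)%nat :: expo_add v' w'
  | [], _ => w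
  | _, [] => v
  end.

Definition pmul (p q : rpoly) : rpoly :=
  flat_map (fun s => map (fun t => (fst s * fst t, expo_add (snd s) (snd t))) q) p.

Definition pone (n : nat) : rpoly := [(1, repeat 0%nat n)].

Fixpoint ppow (n : nat) (p : rpoly) (m : nat) : rpoly :=
  match m with
  | O => pone n
  | S m' => pmul p (ppow n p m')
  end.

Definition is_form (n d : nat) (p : rpoly) : Prop :=
  forall t, In t p -> length (snd t) = n /\ expo_deg (snd t) = d.

Definition nonconstant (n : nat) (p : rpoly) : Prop :=
  exists w, length w = n /\ (1 <= expo_deg w)%nat /\ coef p w <> 0.

Definition strictly_pos_coefs (n d : nat) (p : rpoly) : Prop :=
  forall w, length w = n -> expo_deg w = d -> 0 < coef p w.

Definition in_Rplus_nonzero (n : nat) (x : list R) : Prop :=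
  length x = n /\ Forall (fun a => 0 <= a) x /\ Exists (fun a => a <> 0) x.

Definition nonneg_coefs (p : rpoly) : Prop := forall w, 0 <= coef p w.

From Stdlib Require Import Reals Lra Lia List Arith.
From Coquelicot Require Coquelicot.
From mathcomp Require all_boot all_order all_algebra mpoly Rstruct lra ring zify.
Open Scope R_scope.

(* By compactness of the simplex [sum x_i = 1, x >= 0], [g >= eps > 0] there.  Polya's
   argument then makes all coefficients of [(x_1 + ... + x_n) ^+ N * g] positive for
   [N >= J]: up to the factor [N! / a!], the coefficient of [x^a] is
   [sum_b g_b prod_i (a_i)_(b_i) / |a|^(deg g)], which tends to [g (a / |a|)].
   As [f] has positive coefficients, [f = f' + c (x_1 + ... + x_n) ^+ deg f] with [c > 0]
   and [f'] nonnegative.  Expanding [f ^+ (J + L) * g] binomially, the terms containing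
   [(x_1 + ... + x_n) ^+ (i deg f)] with [i > J] are nonnegative, and the others are
   [f' ^+ L] times a sum whose top term [C(J + L, J) c^J (x_1 + ... + x_n) ^+ (J deg f) g]
   dominates the [J] lower ones once [L] is large. *)

Module SimplexLowerBound.
Import ListNotations Coquelicot.Coquelicot.

Local Notation unit_box := (List.Forall (fun a => 0 <= a <= 1)).

Fixpoint list_of_Tn (n : nat) : Compactness.Tn n R -> list R :=
  match n with
  | O => fun _ => []
  | S k => fun x => fst x :: list_of_Tn k (snd x)
  end.

Fixpoint Tn_of_list (n : nat) (l : list R) : Compactness.Tn n R :=
  match n with
  | O => tt
  | S k => (hd 0 l, Tn_of_list k (tl l))
  end.

Fixpoint Tn_const (n : nat) (c : R) : Compactness.Tn n R :=
  match n with
  | O => tt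
  | S k => (c, Tn_const k c)
  end.

Lemma list_of_Tn_of_list n l : length l = n -> list_of_Tn n (Tn_of_list n l) = l.
Proof.
revert l; induction n as [|k IH]; intros [|a l] hl; simpl in *; try lia; auto.
f_equal; apply IH; lia.
Qed.

Lemma length_list_of_Tn n x : length (list_of_Tn n x) = n.
Proof. induction n as [|k IH]; simpl; auto. Qed.

Lemma bounded_n_unit_box n x :
  bounded_n n (Tn_const n 0) (Tn_const n 1) x <-> unit_box (list_of_Tn n x).
Proof.
induction n as [|k IH]; simpl; [split; auto|].
destruct x as [x1 x2]; simpl; rewrite Forall_cons_iff, (IH x2); tauto.
Qed.

Lemma close_n_Forall2 n e x t : close_n n e x t ->
  List.Forall2 (fun a b => Rabs (a - b) <= e) (list_of_Tn n x) (list_of_Tn n t).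
Proof.
induction n as [|k IH]; simpl; intros h; [constructor|].
destruct x, t, h as [h1 h2]; simpl in *; constructor; [lra | now apply IH].
Qed.

Definition sumR (l : list R) : R := fold_right Rplus 0 l.

Lemma sumR_close l1 l2 e : List.Forall2 (fun a b => Rabs (a - b) <= e) l1 l2 ->
  Rabs (sumR l1 - sumR l2) <= INR (length l1) * e.
Proof.
induction 1 as [|a b l1 l2 hab _ IH].
- simpl; rewrite Rminus_0_r, Rabs_R0; lra.
- change (Rabs (a + sumR l1 - (b + sumR l2)) <= INR (S (length l1)) * e).
  rewrite S_INR.
  replace (a + sumR l1 - (b + sumR l2)) with ((a - b) + (sumR l1 - sumR l2)) by ring.
  pose proof (Rabs_triang (a - b) (sumR l1 - sumR l2)); lra.
Qed.

Lemma sumR_ge0 l : List.Forall (fun a => 0 <= a) l -> 0 <= sumR l.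
Proof. induction 1; simpl; lra. Qed.

Lemma Forall_le_sumR l : List.Forall (fun a => 0 <= a) l -> List.Forall (fun a => 0 <= a <= sumR l) l.
Proof.
induction 1 as [|a l ha hl IH]; constructor; simpl; pose proof (sumR_ge0 l hl).
- lra.
- eapply Forall_impl; [|exact IH]; simpl; intros b hb; lra.
Qed.

Lemma simplex_unit_box l : List.Forall (fun a => 0 <= a) l -> sumR l = 1 -> unit_box l.
Proof. intros hl hs; rewrite <- hs; now apply Forall_le_sumR. Qed.

Lemma sumR_eq1_Exists_neq0 l : sumR l = 1 -> Exists (fun a => a <> 0) l.
Proof.
induction l as [|a l IH]; simpl; intros h; [lra|].
destruct (Req_dec a 0) as [->|ha]; [apply Exists_cons_tl, IH; lra | now apply Exists_cons_hd].
Qed.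

Lemma pow_unit_interval a k : 0 <= a <= 1 -> 0 <= a ^ k <= 1.
Proof.
intros ha; induction k as [|k IH]; simpl; nra.
Qed.

Lemma pow_lipschitz a b k : 0 <= a <= 1 -> 0 <= b <= 1 ->
  Rabs (a ^ k - b ^ k) <= INR k * Rabs (a - b).
Proof.
intros ha hb; induction k as [|k IH].
- simpl; rewrite Rminus_eq_0, Rabs_R0; lra.
- rewrite S_INR; simpl pow.
  replace (a * a ^ k - b * b ^ k) with (a * (a ^ k - b ^ k) + (a - b) * b ^ k) by ring.
  pose proof (pow_unit_interval b k hb).
  pose proof (Rabs_triang (a * (a ^ k - b ^ k)) ((a - b) * b ^ k)).
  rewrite !Rabs_mult, (Rabs_right a), (Rabs_right (b ^ k)) in * by lra.
  pose proof (Rabs_pos (a - b)); pose proof (Rabs_pos (a ^ k - b ^ k)); nra.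
Qed.

Lemma mono_eval_unit_interval w x : unit_box x -> 0 <= mono_eval w x <= 1.
Proof.
revert x; induction w as [|k w IH]; intros [|a x] hx; simpl; try lra.
apply Forall_cons_iff in hx as [ha hx].
pose proof (pow_unit_interval a k ha); pose proof (IH x hx); nra.
Qed.

Lemma mono_eval_lipschitz w x t e : 0 <= e -> unit_box x -> unit_box t ->
  List.Forall2 (fun a b => Rabs (a - b) <= e) x t ->
  Rabs (mono_eval w x - mono_eval w t) <= INR (expo_deg w) * e.
Proof.
intros he hx ht hxt; revert w hx ht; induction hxt as [|a b x t hab hxt IH];
  intros [|k w] hx ht; simpl mono_eval;
  try (rewrite Rminus_eq_0, Rabs_R0; apply Rmult_le_pos; [apply pos_INR | exact he]).
apply Forall_cons_iff in hx as [ha hx]; apply Forall_cons_iff in ht as [hb ht].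
specialize (IH w hx ht).
pose proof (mono_eval_unit_interval w x hx); pose proof (pow_unit_interval b k hb).
replace (a ^ k * mono_eval w x - b ^ k * mono_eval w t)
  with ((a ^ k - b ^ k) * mono_eval w x + b ^ k * (mono_eval w x - mono_eval w t)) by ring.
change (expo_deg (k :: w)) with (k + expo_deg w)%nat; rewrite plus_INR.
assert (hk : Rabs (a ^ k - b ^ k) <= INR k * e).
{ eapply Rle_trans; [apply pow_lipschitz; assumption|].
  apply Rmult_le_compat_l; [apply pos_INR | exact hab]. }
eapply Rle_trans; [apply Rabs_triang|]; rewrite !Rabs_mult.
rewrite (Rabs_right (mono_eval w x)), (Rabs_right (b ^ k)) by lra.
pose proof (Rabs_pos (a ^ k - b ^ k)); pose proof (Rabs_pos (mono_eval w x - mono_eval w t)).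
nra.
Qed.

Definition lip_const (p : rpoly) : R :=
  fold_right (fun t acc => Rabs (fst t) * INR (expo_deg (snd t)) + acc) 0 p.

Lemma lip_const_ge0 p : 0 <= lip_const p.
Proof.
induction p as [|t p IH]; simpl; [lra|].
pose proof (Rabs_pos (fst t)); pose proof (pos_INR (expo_deg (snd t))); nra.
Qed.

Lemma eval_lipschitz p x t e : 0 <= e -> unit_box x -> unit_box t ->
  List.Forall2 (fun a b => Rabs (a - b) <= e) x t ->
  Rabs (eval p x - eval p t) <= lip_const p * e.
Proof.
intros he hx ht hxt; induction p as [|[c w] p IH]; simpl.
- rewrite Rminus_eq_0, Rabs_R0; lra.
- change (Rabs (c * mono_eval w x + eval p x - (c * mono_eval w t + eval p t))
    <= (Rabs c * INR (expo_deg w) + lip_const p) * e).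
  replace (c * mono_eval w x + eval p x - (c * mono_eval w t + eval p t))
    with (c * (mono_eval w x - mono_eval w t) + (eval p x - eval p t)) by ring.
  eapply Rle_trans; [apply Rabs_triang|]; rewrite Rabs_mult.
  pose proof (mono_eval_lipschitz w x t e he hx ht hxt).
  pose proof (Rabs_pos c); nra.
Qed.

Lemma eval_near_ge_half p x t : unit_box x -> unit_box t -> 0 < eval p t ->
  List.Forall2 (fun a b => Rabs (a - b) <= eval p t / (2 * (lip_const p + 1))) x t ->
  eval p t / 2 <= eval p x.
Proof.
intros hx ht hpt hxt; pose proof (lip_const_ge0 p).
assert (he : 0 <= eval p t / (2 * (lip_const p + 1))).
{ apply Rlt_le, Rdiv_lt_0_compat; lra. }
pose proof (eval_lipschitz p x t _ he hx ht hxt) as hlip.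
assert (lip_const p * (eval p t / (2 * (lip_const p + 1))) <= eval p t / 2).
{ apply (Rmult_le_reg_r (2 * (lip_const p + 1))); [lra|].
  field_simplify; [|lra]. nra. }
apply Rabs_le_between in hlip; lra.
Qed.

(* A gauge for Coquelicot's [compactness_value]: around a point of the box where [g > 0]
   the radius keeps [g] above half its value, around a point off the hyperplane [sum = 1]
   it keeps the ball off that hyperplane; the remaining points (on the simplex, with
   [g <= 0]) do not exist. *)
Definition simplex_gauge (n : nat) (g : rpoly) (hn : (0 < n)%nat)
    (t : Compactness.Tn n R) : posreal :=
  let y := list_of_Tn n t in
  match Rlt_dec 0 (eval g y) with
  | left hg => mkposreal (eval g y / (2 * (lip_const g + 1)))
      (Rdiv_lt_0_compat _ _ hg (Rmult_lt_0_compat _ _ Rlt_0_2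
         (Rle_lt_0_plus_1 _ (lip_const_ge0 g))))
  | right _ =>
    match Req_EM_T (sumR y) 1 with
    | left _ => mkposreal 1 Rlt_0_1
    | right hs => mkposreal (Rabs (sumR y - 1) / (2 * INR n))
       (Rdiv_lt_0_compat _ _ (Rabs_pos_lt _ (Rminus_eq_contra _ _ hs))
          (Rmult_lt_0_compat _ _ Rlt_0_2 (lt_0_INR _ hn)))
    end
  end.

Lemma eval_simplex_lower_bound n g : (0 < n)%nat ->
  (forall x, in_Rplus_nonzero n x -> 0 < eval g x) ->
  exists eps, 0 < eps /\ forall x, length x = n -> List.Forall (fun a => 0 <= a) x ->
    sumR x = 1 -> eps <= eval g x.
Proof.
intros hn hpos; pose proof (lip_const_ge0 g).
destruct (compactness_value n (Tn_const n 0) (Tn_const n 1) (simplex_gauge n g hn)) as [d hd].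
exists (d * (lip_const g + 1)); split; [apply Rmult_lt_0_compat; [apply cond_pos | lra]|].
intros x hx hnn hs; pose proof (simplex_unit_box x hnn hs) as hbox.
apply Rnot_lt_le; intros hlt.
refine (hd (Tn_of_list n x) _ _); [apply bounded_n_unit_box; now rewrite list_of_Tn_of_list|].
intros [t [hbt [hxt hdt]]].
apply bounded_n_unit_box in hbt; apply close_n_Forall2 in hxt.
rewrite list_of_Tn_of_list in hxt by exact hx.
unfold simplex_gauge in hxt, hdt; set (y := list_of_Tn n t) in *.
destruct (Rlt_dec 0 (eval g y)) as [hg|hg]; simpl in hxt, hdt.
- pose proof (eval_near_ge_half g x y hbox hbt hg hxt).
  assert (d * (lip_const g + 1) <= eval g y / 2).
  { apply (Rmult_le_compat_r (lip_const g + 1)) in hdt; [|lra].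
    field_simplify in hdt; lra. }
  lra.
- destruct (Req_EM_T (sumR y) 1) as [hy|hy]; simpl in hxt, hdt.
  + apply hg, hpos; split; [apply length_list_of_Tn|split].
    * eapply Forall_impl; [|exact hbt]; simpl; intros a ha; lra.
    * now apply sumR_eq1_Exists_neq0.
  + pose proof (sumR_close _ _ _ hxt) as hclose; rewrite hx, hs in hclose.
    replace (INR n * (Rabs (sumR y - 1) / (2 * INR n))) with (Rabs (sumR y - 1) / 2) in hclose
      by (field; apply not_0_INR; lia).
    rewrite Rabs_minus_sym in hclose; pose proof (Rabs_pos_lt _ (Rminus_eq_contra _ _ hy)); lra.
Qed.

End SimplexLowerBound.

Module PolyaDomination.
Import all_boot all_order all_algebra mpoly Rstruct lra ring zify.
Set Implicit Arguments. Unset Strict Implicit. Unset Printing Implicit Defensive.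
Import Order.TTheory GRing.Theory Num.Theory.
Local Open Scope ring_scope.

Section NonnegCoefs.
Variables (R : numDomainType) (n : nat).
Implicit Types (p q : {mpoly R[n]}).

Definition nneg_mpoly p := forall m, 0 <= p@_m.

Lemma nneg_mpolyD p q : nneg_mpoly p -> nneg_mpoly q -> nneg_mpoly (p + q).
Proof. by move=> hp hq m; rewrite mcoeffD addr_ge0. Qed.

Lemma nneg_mpolyM p q : nneg_mpoly p -> nneg_mpoly q -> nneg_mpoly (p * q).
Proof. by move=> hp hq m; rewrite mcoeffM sumr_ge0 // => k _; rewrite mulr_ge0. Qed.

Lemma nneg_mpolyXn p k : nneg_mpoly p -> nneg_mpoly (p ^+ k).
Proof.
move=> hp; elim: k => [|k ih]; last by rewrite exprS; apply: nneg_mpolyM.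
by move=> m; rewrite expr0 mcoeff1 ler0n.
Qed.

Lemma nneg_mpolyC c : 0 <= c -> nneg_mpoly c%:MP.
Proof. by move=> hc m; rewrite mcoeffC mulr_ge0 ?ler0n. Qed.

Lemma nneg_mpoly_sum (I : Type) (r : seq I) (P : pred I) (F : I -> {mpoly R[n]}) :
  (forall i, P i -> nneg_mpoly (F i)) -> nneg_mpoly (\sum_(i <- r | P i) F i).
Proof. by move=> h m; rewrite raddf_sum; apply: sumr_ge0 => i /h; apply. Qed.

End NonnegCoefs.

Section SumOfVariables.
Variables (R : comNzRingType) (n : nat).

Definition sumX : {mpoly R[n]} := \sum_(i < n) 'X_i.

Lemma sumX_homog : sumX \is 1.-homog.
Proof. by apply: rpred_sum => i _; rewrite dhomogX; apply/eqP/mdeg1. Qed.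

Lemma sumX_expr_homog N : sumX ^+ N \is N.-homog.
Proof. by have := dhomogMn N sumX_homog; rewrite mul1n. Qed.

Lemma mcoeff_XiM (i : 'I_n) (p : {mpoly R[n]}) m :
  ('X_i * p)@_m = if (0 < m i)%N then p@_(m - U_(i))%MM else 0.
Proof.
rewrite mulrC; case: ifP => hi.
  have hU : (U_(i) <= m)%MM by rewrite lep1mP -lt0n.
  by rewrite -{1}(submK hU) addmC mcoeffMX.
apply/eqP; rewrite mcoeff_eq0 (perm_mem (msuppMX p U_(i)) m); apply/negP.
by move=> /mapP [m' _ e]; move: hi; rewrite e mnmDE mnm1E eqxx; case: (m' i).
Qed.

Lemma mcoeff_sumXM (p : {mpoly R[n]}) m : (sumX * p)@_m =
  \sum_(i < n) (if (0 < m i)%N then p@_(m - U_(i))%MM else 0).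
Proof.
by rewrite /sumX mulr_suml raddf_sum; apply: eq_bigr => i _; apply: mcoeff_XiM.
Qed.

End SumOfVariables.

Section MultinomialFactorials.
Variable n : nat.
Implicit Types (a b : 'X_{1..n}).

Definition mfact a := (\prod_(i < n) (a i)`!)%N.
Definition mffact a b := (\prod_(i < n) a i ^_ b i)%N.

Lemma mfact_gt0 a : (0 < mfact a)%N.
Proof. by apply: prodn_gt0 => i; apply: fact_gt0. Qed.

Lemma mfact_sub a (i : 'I_n) : (0 < a i)%N -> mfact a = (a i * mfact (a - U_(i))%MM)%N.
Proof.
move=> hi; rewrite /mfact (bigD1 i) //= [in RHS](bigD1 i) //= mnmBE mnm1E eqxx.
case: (a i) hi => [//|k] _; rewrite subn1 /= factS mulnA; congr (_ * _)%N.
by apply: eq_bigr => j hj; rewrite mnmBE mnm1E eq_sym (negbTE hj) subn0.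
Qed.

Lemma mffact_sub a b (i : 'I_n) :
  (a i * mffact (a - U_(i))%MM b = mffact a b * (a i - b i))%N.
Proof.
rewrite /mffact (bigD1 i) //= [in RHS](bigD1 i) //= mnmBE mnm1E eqxx.
under [in X in (_ * (_ * X))%N]eq_bigr => j hj do
  rewrite mnmBE mnm1E eq_sym (negbTE hj) subn0.
case: (a i) => [|k]; first by rewrite sub0n !muln0 mul0n.
by rewrite subn1 /= mulnA -ffactSS ffactnSr; ring.
Qed.

Lemma mnm_eq_of_le_mdeg a b : (forall i, b i <= a i)%N -> mdeg a = mdeg b -> a = b.
Proof.
move=> hle hd; apply/mnmP => i; apply/eqP; rewrite eqn_leq hle andbT.
have hs : (\sum_(j < n) (a j - b j) = 0)%N.
  apply/eqP; rewrite -(eqn_add2r (\sum_(j < n) b j)) add0n -big_split /=.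
  rewrite -!mdegE -hd mdegE; apply/eqP; apply: eq_bigr => j _; by rewrite subnK.
have : (a i - b i <= \sum_(j < n) (a j - b j))%N by rewrite (bigD1 i) //= leq_addr.
by rewrite hs leqn0 subn_eq0.
Qed.

Lemma sum_mffact_sub a b : (mdeg b <= mdeg a)%N ->
  (\sum_(i < n) a i * mffact (a - U_(i))%MM b = mffact a b * (mdeg a - mdeg b))%N.
Proof.
move=> hdeg; rewrite (eq_bigr _ (fun i _ => mffact_sub a b i)) -big_distrr /=.
case: (posnP (mffact a b)) => [->|pos]; first by rewrite !mul0n.
have hle i : (b i <= a i)%N.
  rewrite leqNgt; apply/negP => lt; move: pos.
  by rewrite /mffact (bigD1 i) //= ffact_small // mul0n.
congr (_ * _)%N; apply/eqP; rewrite -(eqn_add2r (mdeg b)) subnK // mdegE -big_split /=.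
by rewrite mdegE; apply/eqP; apply: eq_bigr => j _; rewrite subnK.
Qed.

Lemma mcoeff_sumX_exprMX (R : comNzRingType) N a b : mdeg a = (N + mdeg b)%N ->
  (sumX R n ^+ N * 'X_[b])@_a * (mfact a)%:R = (N`! * mffact a b)%:R.
Proof.
elim: N a => [|N ih] a ha.
  rewrite expr0 mul1r mcoeffX fact0 mul1n.
  case: (eqVneq b a) => [->|nab].
    by rewrite mul1r /mfact /mffact; congr (_%:R); apply: eq_bigr => i _; rewrite ffactnn.
  rewrite mul0r; case: (boolP [exists i, (a i < b i)%N]) => [/existsP [i hi]|/existsPn h].
    by rewrite /mffact (bigD1 i) //= ffact_small // mul0n.
  by case/eqP: nab; apply/esym/mnm_eq_of_le_mdeg => // i; rewrite leqNgt; apply: h.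
rewrite exprS -mulrA mcoeff_sumXM mulr_suml factS [(N.+1 * _)%N]mulnC -mulnA.
have -> : (N.+1 * mffact a b = \sum_(i < n) a i * mffact (a - U_(i))%MM b)%N.
  by rewrite sum_mffact_sub ?ha ?leq_addl // addnK mulnC.
rewrite big_distrr /= natr_sum; apply: eq_bigr => i _.
case: ifP => hi; last first.
  have -> : a i = 0%N by apply/eqP; rewrite eqn0Ngt hi.
  by rewrite mul0r mul0n muln0.
rewrite (mfact_sub hi) natrM mulrCA ih; first by rewrite -natrM; congr (_%:R); ring.
have e : a = ((a - U_(i)) + U_(i))%MM by rewrite submK // lep1mP -lt0n.
by move: ha; rewrite {1}e mdegD mdeg1 addn1 addSn => /eqP; rewrite eqSS => /eqP.
Qed.

End MultinomialFactorials.

Section ProductEstimates.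
Variable R : numDomainType.

Lemma norm_prod_le1 (I : Type) (r : seq I) (F : I -> R) :
  (forall i, `|F i| <= 1) -> `|\prod_(i <- r) F i| <= 1.
Proof.
move=> h; elim: r => [|x r ih]; first by rewrite big_nil normr1.
by rewrite big_cons normrM mulr_ile1.
Qed.

Lemma norm_prodB_le (I : Type) (r : seq I) (F G : I -> R) :
  (forall i, `|F i| <= 1) -> (forall i, `|G i| <= 1) ->
  `|\prod_(i <- r) F i - \prod_(i <- r) G i| <= \sum_(i <- r) `|F i - G i|.
Proof.
move=> hF hG; elim: r => [|x r ih]; first by rewrite !big_nil subrr normr0.
rewrite !big_cons.
have -> : F x * \prod_(j <- r) F j - G x * \prod_(j <- r) G j =
  F x * (\prod_(j <- r) F j - \prod_(j <- r) G j) + (F x - G x) * \prod_(j <- r) G j by ring.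
apply: le_trans (ler_normD _ _) _; rewrite !normrM addrC lerD //.
  by rewrite -[X in _ <= X]mulr1 ler_wpM2l ?norm_prod_le1.
by apply: le_trans ih; rewrite -[X in _ <= X]mul1r ler_wpM2r.
Qed.

Lemma prod_natrB (x k : nat) : \prod_(j < k) (x%:R - j%:R : R) = (x ^_ k)%:R.
Proof.
elim: k => [|k ih]; first by rewrite big_ord0.
rewrite big_ord_recr /= ih ffactnSr natrM.
by case: (leqP k x) => hk; [rewrite natrB | rewrite ffact_small // !mul0r].
Qed.

End ProductEstimates.

Section Polya.
Variables (R : archiRealFieldType) (n : nat).
Local Notation P := {mpoly R[n]}.
Implicit Types (a b : 'X_{1..n}).

Definition scaled_mffact (M : R) a b :=
  \prod_(i < n) \prod_(j < b i) ((a i)%:R / M - j%:R / M).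

Lemma mffact_scaled (M : R) a b : M != 0 ->
  (mffact a b)%:R = M ^+ mdeg b * scaled_mffact M a b.
Proof.
move=> hM; rewrite /mffact natr_prod mdegE -prodrXr -big_split /=.
apply: eq_bigr => i _; rewrite -prod_natrB.
have -> : M ^+ b i = \prod_(j < b i) M by rewrite prodr_const card_ord.
by rewrite -big_split; apply: eq_bigr => j _ /=; field.
Qed.

Lemma mnm_le_mdeg a i : (a i <= mdeg a)%N.
Proof. by rewrite mdegE (bigD1 i) //= leq_addr. Qed.

Lemma scaled_mffact_approx (M : R) (a b : 'X_{1..n}) :
  0 < M -> (forall i, (a i)%:R <= M) -> (mdeg b)%:R <= M ->
  `|scaled_mffact M a b - \prod_(i < n) ((a i)%:R / M) ^+ b i|
    <= (mdeg b)%:R * (mdeg b)%:R / M.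
Proof.
move=> hM haM hbM; set t := fun i => (a i)%:R / M.
have ht i : 0 <= t i <= 1.
  by rewrite /t divr_ge0 ?ler0n ?(ltW hM) //= ler_pdivrMr // mul1r.
have hj i (j : 'I_(b i)) : 0 <= j%:R / M <= (mdeg b)%:R / M.
  rewrite divr_ge0 ?ler0n ?(ltW hM) //= ler_pM2r ?invr_gt0 // ler_nat.
  exact: leq_trans (ltnW (ltn_ord j)) (mnm_le_mdeg b i).
have hbM' : (mdeg b)%:R / M <= 1 by rewrite ler_pdivrMr // mul1r.
have le1 (x : R) : 0 <= x <= 1 -> `|x| <= 1 by case/andP=> h0 h1; rewrite ger0_norm.
have hdiff i (j : 'I_(b i)) : `|t i - j%:R / M| <= 1.
  by rewrite ler_norml; have := ht i; have := hj i j; case/andP=> ? ? /andP[? ?]; lra.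
have hpow i : t i ^+ b i = \prod_(j < b i) t i by rewrite prodr_const card_ord.
rewrite /scaled_mffact -/t; under [X in `|_ - X|]eq_bigr => i _ do rewrite hpow.
apply: le_trans (norm_prodB_le _ _ _) _ => [i|i|].
- by apply: norm_prod_le1 => j; apply: hdiff.
- by apply: norm_prod_le1 => j; apply/le1/ht.
rewrite -mulrA {1}mdegE natr_sum mulr_suml ler_sum // => i _.
apply: le_trans (norm_prodB_le _ _ _) _ => [j|j|]; [exact: hdiff | exact/le1/ht|].
have -> : (b i)%:R * ((mdeg b)%:R / M) = \sum_(j < b i) ((mdeg b)%:R / M).
  by rewrite sumr_const card_ord mulr_natl.
rewrite ler_sum // => j _.
rewrite addrAC subrr add0r normrN ger0_norm; by case/andP: (hj i j).
Qed.

Lemma mcoeff_sumX_exprM (g : P) D N a (M : R) : g \is D.-homog ->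
  mdeg a = (N + D)%N -> M != 0 ->
  (sumX R n ^+ N * g)@_a * (mfact a)%:R =
  (N`!)%:R * M ^+ D * \sum_(b <- msupp g) g@_b * scaled_mffact M a b.
Proof.
move=> hg ha hM; rewrite {1}(mpolyE g) mulr_sumr raddf_sum mulr_suml mulr_sumr /=.
apply: eq_big_seq => b hb; have hbD : mdeg b = D := dhomog_mf hg hb.
rewrite -scalerAr mcoeffZ -[_ * _ * (mfact a)%:R]mulrA mcoeff_sumX_exprMX ?hbD //.
by rewrite natrM (mffact_scaled _ _ hM) hbD; ring.
Qed.

Lemma polya_positive_coefs (g : P) D (eps : R) : g \is D.-homog -> 0 < eps ->
  (forall a, (0 < mdeg a)%N -> eps <= g.@[fun i => (a i)%:R / (mdeg a)%:R]) ->
  exists N0, forall N, (N0 <= N)%N -> forall a, mdeg a = (N + D)%N ->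
    0 < (sumX R n ^+ N * g)@_a.
Proof.
move=> hg heps hpos; set C := \sum_(b <- msupp g) `|g@_b|.
have hC : 0 <= C by rewrite sumr_ge0.
have hK : 0 <= C * (D%:R * D%:R) / eps by rewrite divr_ge0 ?mulr_ge0 ?ler0n // ltW.
exists (Num.Def.archi_bound (C * (D%:R * D%:R) / eps)).+1 => N hN a ha.
have hN0 : (0 < N)%N by apply: leq_trans hN.
set M : R := (mdeg a)%:R.
have hM : 0 < M by rewrite ltr0n ha addn_gt0 hN0.
have hKM : C * (D%:R * D%:R / M) < eps.
  rewrite mulrA ltr_pdivrMr // [eps * M]mulrC -ltr_pdivrMr //; apply: lt_le_trans (archi_boundP hK) _.
  by rewrite /M ha ler_nat (leq_trans (ltnW hN)) ?leq_addr.
have happrox : `|\sum_(b <- msupp g) g@_b * scaled_mffact M a b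
                 - g.@[fun i => (a i)%:R / M]| <= C * (D%:R * D%:R / M).
  rewrite mevalE -sumrB /C mulr_suml; apply: le_trans (ler_norm_sum _ _ _) _.
  rewrite big_seq [X in _ <= X]big_seq; apply: ler_sum => b hb.
  rewrite -mulrBr normrM ler_wpM2l // -(dhomog_mf hg hb).
  apply: scaled_mffact_approx => // [i|]; rewrite /M ler_nat ?mnm_le_mdeg //.
  by rewrite ha (dhomog_mf hg hb) leq_addl.
have hS : 0 < \sum_(b <- msupp g) g@_b * scaled_mffact M a b.
  have := hpos a; rewrite -/M ha addn_gt0 hN0 => /(_ isT).
  by move: happrox; rewrite ler_norml => /andP[]; lra.
have := mcoeff_sumX_exprM hg ha (lt0r_neq0 hM).
have hfact : 0 < (mfact a)%:R :> R by rewrite ltr0n mfact_gt0.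
move=> /(congr1 (fun x => x / (mfact a)%:R)); rewrite mulfK ?lt0r_neq0 // => ->.
by rewrite divr_gt0 // !mulr_gt0 ?exprn_gt0 // ltr0n fact_gt0.
Qed.

End Polya.

Section BinomialDomination.
Variable R : archiRealFieldType.

Lemma leq_bin_half m i k : (i <= k)%N -> (k.*2 < m)%N -> ('C(m, i) <= 'C(m, k))%N.
Proof.
elim: k => [|k ih]; first by rewrite leqn0 => /eqP ->.
rewrite leq_eqVlt => /orP [/eqP -> //|hi] hk.
apply: leq_trans (ih hi _) _; first lia.
by rewrite -(leq_pmul2l (ltn0Sn k)) mul_bin_left leq_mul //; lia.
Qed.

(* For large [L] the top term [c^J C(J+L, J) q_J] outweighs the [J] lower ones, since
   [J C(J+L, J) = (L+1) C(J+L, J-1)] while each lower binomial is at most [C(J+L, J-1)]. *)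
Lemma binomial_sum_ge0 J (c B δ : R) : 0 < c <= 1 -> 0 < δ ->
  exists L0, forall L, (L0 <= L)%N -> forall q : nat -> R,
    (forall i, (i < J)%N -> `|q i| <= B) -> δ <= q J ->
    0 <= \sum_(0 <= i < J.+1) c ^+ i * ('C(J + L, i))%:R * q i.
Proof.
move=> /andP[hc0 hc1] hδ; have hcJ : 0 < c ^+ J * δ by rewrite mulr_gt0 ?exprn_gt0.
set K := J%:R * J%:R * `|B| / (c ^+ J * δ).
have hK : 0 <= K by rewrite /K divr_ge0 ?(ltW hcJ) // !mulr_ge0 ?ler0n.
exists (maxn J (Num.Def.archi_bound K)) => L; rewrite geq_max => /andP[hJL hKL] q hq hqJ.
rewrite big_nat_recr //=.
have htop : c ^+ J * ('C(J + L, J))%:R * δ <= c ^+ J * ('C(J + L, J))%:R * q J.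
  by apply: ler_wpM2l hqJ; rewrite mulr_ge0 ?exprn_ge0 ?ler0n ?ltW.
have hδJ : 0 <= c ^+ J * ('C(J + L, J))%:R * δ by rewrite !mulr_ge0 ?exprn_ge0 ?ler0n ?ltW.
case: (posnP J) => [J0|Jpos].
  by move: htop hδJ; rewrite J0 big_geq // add0r => ? ?; lra.
set Cm : R := ('C(J + L, J.-1))%:R.
have hlow : - (J%:R * (Cm * `|B|)) <= \sum_(0 <= i < J) c ^+ i * ('C(J + L, i))%:R * q i.
  have -> : - (J%:R * (Cm * `|B|)) = \sum_(0 <= i < J) - (Cm * `|B|).
    by rewrite sumr_const_nat subn0 mulNrn mulr_natl.
  apply: ler_sum_nat => i /andP[_ hi] /=.
  have hCi : ('C(J + L, i))%:R <= Cm by rewrite ler_nat leq_bin_half; lia.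
  have hci : c ^+ i <= 1 by rewrite exprn_ile1 // ltW.
  have hqi : `|q i| <= `|B| by apply: le_trans (hq i hi) (ler_norm B).
  suff : `|c ^+ i * ('C(J + L, i))%:R * q i| <= Cm * `|B| by rewrite ler_norml => /andP[].
  rewrite !normrM (ger0_norm (exprn_ge0 _ (ltW hc0))) ger0_norm ?ler0n //.
  apply: ler_pM; rewrite ?mulr_ge0 ?exprn_ge0 ?ler0n ?normr_ge0 ?(ltW hc0) //.
  by rewrite -[Cm]mul1r; apply: ler_pM; rewrite ?exprn_ge0 ?ler0n ?(ltW hc0).
have hbin : J%:R * ('C(J + L, J))%:R = (L.+1)%:R * Cm :> R.
  rewrite /Cm -!natrM; have := mul_bin_left (J + L) J.-1; rewrite prednK // => ->.
  by congr (_ * _)%:R; lia.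
have hKL' : J%:R * J%:R * `|B| <= (L.+1)%:R * (c ^+ J * δ).
  rewrite -ler_pdivrMr //; apply/ltW/(lt_le_trans (archi_boundP hK)).
  by rewrite ler_nat; lia.
have : J%:R * (Cm * `|B|) <= c ^+ J * ('C(J + L, J))%:R * δ.
  rewrite -(ler_pM2l (_ : 0 < J%:R)) ?ltr0n //.
  rewrite (_ : _ * (_ * _ * δ) = J%:R * ('C(J + L, J))%:R * (c ^+ J * δ)); last by ring.
  rewrite hbin (_ : _ * (_ * (_ * _)) = Cm * (J%:R * J%:R * `|B|)); last by ring.
  rewrite (_ : (L.+1)%:R * Cm * _ = Cm * ((L.+1)%:R * (c ^+ J * δ))); last by ring.
  by rewrite ler_wpM2l ?ler0n.
lra.
Qed.

End BinomialDomination.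

Section Domination.
Variables (R : archiRealFieldType) (n : nat).
Local Notation P := {mpoly R[n]}.

Lemma finite_lower_bound (I : finType) (Q : pred I) (F : I -> R) :
  (forall i, Q i -> 0 < F i) ->
  exists c, [/\ 0 < c, c <= 1 & forall i, Q i -> c <= F i].
Proof.
move=> hF; set S := \sum_(i | Q i) (F i)^-1.
have hS : 0 <= S by apply: sumr_ge0 => i /hF h; rewrite invr_ge0 ltW.
exists (1 + S)^-1; split; [by rewrite invr_gt0; lra | by rewrite invf_le1; lra |].
move=> i hi; have hFi := hF i hi.
have : (F i)^-1 <= 1 + S.
  rewrite /S (bigD1 i) //=; suff : 0 <= \sum_(j | Q j && (j != i)) (F j)^-1 by lra.
  by apply: sumr_ge0 => j /andP [/hF h _]; rewrite invr_ge0 ltW.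
by rewrite -[F i]invrK lef_pV2 ?posrE ?invr_gt0 //; lra.
Qed.

Lemma mdeg_lower_bound (F : 'X_{1..n} -> R) K :
  (forall a : 'X_{1..n}, mdeg a = K -> 0 < F a) ->
  exists c, [/\ 0 < c, c <= 1 & forall a : 'X_{1..n}, mdeg a = K -> c <= F a].
Proof.
move=> hF; have [c [hc0 hc1 hc]] := @finite_lower_bound 'X_{1..n < K.+1}
  (fun b => mdeg (bmnm b) == K) (fun b => F (bmnm b)) (fun b hb => hF _ (eqP hb)).
exists c; split => // a ha; have hb : (mdeg a < K.+1)%N by rewrite ha.
exact: (hc (BMultinom hb) (introT eqP ha)).
Qed.

Lemma norm_mcoeff_le (p : P) a : `|p@_a| <= \sum_(b <- msupp p) `|p@_b|.
Proof.
have hsum : 0 <= \sum_(b <- msupp p) `|p@_b| by rewrite sumr_ge0.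
case: (boolP (a \in msupp p)) => ha; last by move: ha; rewrite -mcoeff_eq0 => /eqP ->; rewrite normr0.
rewrite (bigD1_seq a) //= ?msupp_uniq // lerDl.
by rewrite sumr_ge0.
Qed.

Lemma nneg_sumX_expr N : nneg_mpoly (sumX R n ^+ N).
Proof.
apply/nneg_mpolyXn/nneg_mpoly_sum => i _ m.
by rewrite mcoeffX ler0n.
Qed.

Lemma nneg_of_homog_pos (p : P) K : p \is K.-homog ->
  (forall a, mdeg a = K -> 0 <= p@_a) -> nneg_mpoly p.
Proof.
move=> hp hpos a; case: (eqVneq (mdeg a) K) => [/hpos //|ne].
by rewrite (dhomog_nemf_coeff hp ne).
Qed.

Lemma sumX_expr_dominated (f : P) d : f \is d.-homog ->
  (forall a, mdeg a = d -> 0 < f@_a) ->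
  exists c : R, 0 < c <= 1 /\ nneg_mpoly (f - c%:MP * sumX R n ^+ d).
Proof.
move=> hf hfpos; set X := sumX R n ^+ d.
have hX : X \is d.-homog := sumX_expr_homog R n d.
have nX := nneg_sumX_expr d.
have [a ha|c [hc0 hc1 hc]] := mdeg_lower_bound (F := fun a => f@_a / (X@_a + 1)) (K := d).
  by rewrite divr_gt0 ?hfpos ?ltr_wpDl.
exists c; split; first by apply/andP.
apply: (nneg_of_homog_pos (K := d)).
  by rewrite rpredB // mul_mpolyC dhomogZ.
move=> a ha; rewrite mcoeffB mcoeffCM subr_ge0.
have := hc a ha; have := nX a; rewrite ler_pdivlMr; last by have := nX a; lra.
by rewrite mulrDr mulr1 => ? ?; lra.
Qed.

Lemma nneg_binomial_mpoly_sum J K (c : R) (Q : nat -> P) : 0 < c <= 1 ->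
  (forall i, (i <= J)%N -> Q i \is K.-homog) ->
  (forall a, mdeg a = K -> 0 < (Q J)@_a) ->
  exists L0, forall L, (L0 <= L)%N ->
    nneg_mpoly (\sum_(0 <= i < J.+1) (c ^+ i * ('C(J + L, i))%:R)%:MP * Q i).
Proof.
move=> hc hQ hQJ; have [δ [hδ _ hδQ]] := mdeg_lower_bound hQJ.
set B := \sum_(i < J.+1) \sum_(b <- msupp (Q i)) `|(Q i)@_b|.
have hB a i : (i < J)%N -> `|(Q i)@_a| <= B.
  move=> hi; apply: le_trans (norm_mcoeff_le _ a) _.
  rewrite /B (bigD1 (Ordinal (ltnW hi : (i < J.+1)%N))) //= lerDl.
  by rewrite !sumr_ge0 // => k _; rewrite sumr_ge0.
have [L0 hL0] := binomial_sum_ge0 J B hc hδ.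
exists L0 => L hL; apply: (nneg_of_homog_pos (K := K)).
  by rewrite big_nat rpred_sum // => i /andP[_ hi]; rewrite mul_mpolyC dhomogZ ?hQ.
move=> a ha; rewrite raddf_sum /=.
under eq_bigr => i _ do rewrite mcoeffCM.
exact: hL0 (hB a) (hδQ a ha).
Qed.

Lemma mpolyC_exprMn (c : R) i k : (c%:MP : P) ^+ i *+ k = (c ^+ i * k%:R)%:MP.
Proof. by rewrite rmorphM rmorphXn rmorph_nat mulr_natr. Qed.

Lemma nneg_exprM_of_polya (f g : P) d D : (0 < d)%N ->
  f \is d.-homog -> g \is D.-homog -> (forall a, mdeg a = d -> 0 < f@_a) ->
  (exists N0, forall N, (N0 <= N)%N -> forall a, mdeg a = (N + D)%N ->
     0 < (sumX R n ^+ N * g)@_a) ->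
  exists m, (0 < m)%N /\ nneg_mpoly (f ^+ m * g).
Proof.
move=> hd hf hg hfpos [J hJ].
have [c [hc hf'0]] := sumX_expr_dominated hf hfpos.
set X := sumX R n ^+ d; set f' := f - c%:MP * X.
have hX : X \is d.-homog := sumX_expr_homog R n d.
have hf' : f' \is d.-homog by rewrite rpredB // mul_mpolyC dhomogZ.
have hS N : (J <= N)%N -> nneg_mpoly (sumX R n ^+ N * g).
  move=> hN; apply: (nneg_of_homog_pos (K := N + D)); last by move=> a /(hJ N hN)/ltW.
  exact: dhomogM (sumX_expr_homog R n N) hg.
set Q := fun i => f' ^+ (J - i) * X ^+ i * g.
have hQ i : (i <= J)%N -> Q i \is (d * J + D).-homog.
  move=> hi; have := dhomogM (dhomogM (dhomogMn (J - i) hf') (dhomogMn i hX)) hg.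
  by rewrite -mulnDr subnK.
have hQJ : Q J = sumX R n ^+ (d * J) * g by rewrite /Q subnn expr0 mul1r /X -exprM.
have [a ha|L0 hL0] := nneg_binomial_mpoly_sum hc hQ.
  by rewrite hQJ hJ // leq_pmull.
exists (J + L0.+1)%N; split; first by rewrite addnS.
rewrite -(subrK (c%:MP * X) f) -/f' exprDn mulr_suml.
rewrite -(big_mkord xpredT (fun i => f' ^+ (J + L0.+1 - i) * (c%:MP * X) ^+ i
                                     *+ 'C(J + L0.+1, i) * g)).
rewrite (big_cat_nat _ (n := J.+1)) //=; last by rewrite ltnS leq_addr.
apply: nneg_mpolyD.
  rewrite (_ : \sum_(0 <= i < J.+1) _ = f' ^+ L0.+1 *
      \sum_(0 <= i < J.+1) (c ^+ i * ('C(J + L0.+1, i))%:R)%:MP * Q i).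
    exact/nneg_mpolyM/hL0/leqnSn/nneg_mpolyXn.
  rewrite mulr_sumr; apply: eq_big_nat => i /andP[_ hi].
  rewrite (_ : (J + L0.+1 - i = L0.+1 + (J - i))%N); last by lia.
  by rewrite -mpolyC_exprMn /Q exprD exprMn; ring.
rewrite big_nat; apply: nneg_mpoly_sum => i /andP [hJi _].
rewrite (_ : _ * g = (c ^+ i * ('C(J + L0.+1, i))%:R)%:MP * f' ^+ (J + L0.+1 - i)
                      * (sumX R n ^+ (d * i) * g)); last first.
  by rewrite -mpolyC_exprMn exprM exprMn; ring.
apply/nneg_mpolyM/hS; last by apply: leq_trans (ltnW hJi) (leq_pmull _ hd).
apply/nneg_mpolyM/nneg_mpolyXn => //.
by apply: nneg_mpolyC; rewrite mulr_ge0 ?exprn_ge0 ?ler0n //; case/andP: hc => /ltW.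
Qed.

End Domination.

Lemma RpowE (x : R) k : pow x k = x ^+ k.
Proof. by elim: k => //= k ->; rewrite exprS. Qed.

Lemma mono_eval_prod k (w : seq nat) (x : seq R) : length w = k -> length x = k ->
  mono_eval w x = \prod_(i < k) nth 0 x i ^+ nth 0%N w i.
Proof.
elim: k w x => [|k ih] [|a w] [|b x] //= hw hx; first by rewrite big_ord0.
by rewrite big_ord_recl /= RpowE ih //; [case: hw | case: hx].
Qed.

Section ListPolynomials.
Variable n : nat.
Local Notation P := {mpoly R[n]}.

Definition mnm_of_expo (w : expo) : 'X_{1..n} := [multinom nth 0%N w i | i < n].
Definition mpoly_of (p : rpoly) : P := \sum_(t <- p) t.1 *: 'X_[mnm_of_expo t.2].
Definition rpoly_wf (p : rpoly) := forall t, List.In t p -> length t.2 = n.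

Lemma size_length (T : Type) (l : list T) : size l = length l.
Proof. by elim: l => //= a l ->. Qed.

Lemma mnm_of_expo_add v w :
  mnm_of_expo (expo_add v w) = (mnm_of_expo v + mnm_of_expo w)%MM.
Proof.
apply/mnmP => i; rewrite mnmDE !mnmE.
by elim: v w (val i) => [|a v ih] [|b w] [|k] //=; rewrite ?addn0.
Qed.

Lemma mnm_of_expo_inj v w : length v = n -> length w = n ->
  mnm_of_expo v = mnm_of_expo w -> v = w.
Proof.
move=> hv hw e; apply: (@eq_from_nth _ 0%N); first by rewrite !size_length hv hw.
move=> i; rewrite size_length hv => hi.
by have := congr1 (fun m : 'X_{1..n} => m (Ordinal hi)) e; rewrite /= !mnmE.
Qed.

Lemma mdeg_mnm_of_expo w : length w = n -> mdeg (mnm_of_expo w) = expo_deg w.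
Proof.
move=> hw; rewrite mdegE (_ : expo_deg w = sumn w); last by elim: w {hw} => //= a w ->.
rewrite sumnE (big_nth 0%N) size_length hw big_mkord.
by apply: eq_bigr => i _; rewrite mnmE.
Qed.

Lemma mpoly_of_cat p q : mpoly_of (p ++ q) = mpoly_of p + mpoly_of q.
Proof. exact: big_cat. Qed.

Lemma mpoly_of_pmul p q : mpoly_of (pmul p q) = mpoly_of p * mpoly_of q.
Proof.
elim: p => [|s p ih]; first by rewrite /mpoly_of big_nil mul0r.
rewrite /pmul /= -/(pmul p q) mpoly_of_cat ih /mpoly_of big_cons mulrDl.
congr (_ + _); rewrite big_map mulr_sumr; apply: eq_bigr => t _ /=.
by rewrite mnm_of_expo_add mpolyXD -scalerAl -scalerAr scalerA.
Qed.

Lemma mpoly_of_ppow f m : mpoly_of (ppow n f m) = mpoly_of f ^+ m.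
Proof.
elim: m => [|m ih]; last by rewrite /= mpoly_of_pmul ih exprS.
rewrite /mpoly_of /pone big_seq1 /= (_ : mnm_of_expo _ = 0%MM) ?mpolyX0 ?scale1r //.
have h k j : nth 0%N (repeat 0%N k) j = 0%N by elim: k j => [|k ih] [|j] //=.
by apply/mnmP => i; rewrite mnmE mnm0E h.
Qed.

Lemma rpoly_wf_pmul p q : rpoly_wf p -> rpoly_wf q -> rpoly_wf (pmul p q).
Proof.
move=> hp hq t /in_flat_map [s [hs /in_map_iff [u [<- hu]]]] /=.
rewrite (_ : forall v w, length (expo_add v w) = Nat.max (length v) (length w)).
  by rewrite (hp s hs) (hq u hu) Nat.max_id.
by elim=> [|a v ih] [|b w] //=; rewrite ih.
Qed.

Lemma rpoly_wf_ppow f m : rpoly_wf f -> rpoly_wf (ppow n f m).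
Proof.
move=> hf; elim: m => [|m ih] /=; last exact: rpoly_wf_pmul.
by move=> t [<-|[]] /=; rewrite repeat_length.
Qed.

Lemma rpoly_wf_form d p : is_form n d p -> rpoly_wf p.
Proof. by move=> h t ht; case: (h t ht). Qed.

Lemma coef_mpoly_of p w : rpoly_wf p ->
  coef p w = if length w == n then (mpoly_of p)@_(mnm_of_expo w) else 0.
Proof.
elim: p => [|t p ih] hp; first by rewrite /mpoly_of big_nil mcoeff0; case: ifP.
have ht : length t.2 = n by apply: hp; left.
rewrite /coef /= -/(coef p w) ih; last by move=> u hu; apply: hp; right.
rewrite /mpoly_of big_cons mcoeffD mcoeffZ mcoeffX -/(mpoly_of p).
case: (list_eq_dec Nat.eq_dec t.2 w) => [<-|ne]; first by rewrite ht !eqxx mulr1.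
rewrite Rplus_0_l; case: eqP => // hw.
case: eqP => [e|_]; last by rewrite mulr0 add0r.
by case: ne; apply: mnm_of_expo_inj ht hw e.
Qed.

Lemma homog_mpoly_of d p : is_form n d p -> mpoly_of p \is d.-homog.
Proof.
elim: p => [|t p ih] hp; first by rewrite /mpoly_of big_nil rpred0.
have [hl hd] := hp t (or_introl erefl).
rewrite /mpoly_of big_cons rpredD ?dhomogZ ?dhomogX /= ?mdeg_mnm_of_expo ?hd //.
by apply: ih => u hu; apply: hp; right.
Qed.

Lemma mcoeff_mpoly_of_gt0 d f : is_form n d f -> strictly_pos_coefs n d f ->
  forall a : 'X_{1..n}, mdeg a = d -> 0 < (mpoly_of f)@_a.
Proof.
move=> hf hs a ha; set w : seq nat := tval (multinom_val a).
have hw : length w = n by rewrite -size_length size_tuple.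
have ew : mnm_of_expo w = a by apply/mnmP => i; rewrite mnmE (mnm_nth 0%N).
have hdw : expo_deg w = d by rewrite -ha -ew mdeg_mnm_of_expo.
have := hs w hw hdw; rewrite coef_mpoly_of; last exact: rpoly_wf_form hf.
by case: eqP => [_|/(_ hw) //]; rewrite ew => /RltP.
Qed.

Lemma eval_mpoly_of p (v : 'I_n -> R) : rpoly_wf p ->
  eval p [seq v i | i <- enum 'I_n] = (mpoly_of p).@[v].
Proof.
set x := [seq v i | i <- enum 'I_n].
have hx : length x = n by rewrite -size_length size_map size_enum_ord.
have hxi (i : 'I_n) : nth 0 x i = v i by rewrite (nth_map i) ?size_enum_ord // nth_ord_enum.
elim: p => [|t p ih] hp; first by rewrite /mpoly_of big_nil meval0.
have ht : length t.2 = n by apply: hp; left.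
rewrite /mpoly_of big_cons mevalD mevalZ mevalX -/(mpoly_of p) -ih; last first.
  by move=> u hu; apply: hp; right.
rewrite /eval /= -/(eval p x) (mono_eval_prod ht hx); congr (_ * _ + _).
by apply: eq_bigr => i _; rewrite hxi mnmE.
Qed.

Lemma meval_simplex_lower_bound g (eps : R) : rpoly_wf g ->
  (forall x, length x = n -> List.Forall (fun a => Rle 0 a) x ->
     SimplexLowerBound.sumR x = 1 -> Rle eps (eval g x)) ->
  forall a : 'X_{1..n}, (0 < mdeg a)%N ->
    eps <= (mpoly_of g).@[fun i => (a i)%:R / (mdeg a)%:R].
Proof.
move=> hg hbd a ha; rewrite -eval_mpoly_of //; apply/RleP/hbd.
- by rewrite -size_length size_map size_enum_ord.
- apply/Forall_forall => y /in_map_iff [i [<- _]].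
  by apply/RleP; rewrite divr_ge0 ?ler0n.
- have -> l : SimplexLowerBound.sumR l = \sum_(y <- l) y.
    by elim: l => [|y l ih]; rewrite ?big_nil ?big_cons -?ih.
  by rewrite big_map big_enum /= -mulr_suml -natr_sum -mdegE divff // pnatr_eq0 -lt0n.
Qed.

End ListPolynomials.

Lemma nonconstant_form_gt0 n d f : is_form n d f -> nonconstant n f ->
  (0 < n)%N /\ (0 < d)%N.
Proof.
move=> hf [w [hw [hdeg hc]]]; split.
  by rewrite -hw; case: w {hw hc} hdeg => [|a w] /= /ssrnat.leP.
elim: f hf hc => [|t f ih] hf; first by rewrite /coef.
rewrite /coef /=; case: (list_eq_dec Nat.eq_dec t.2 w) => [e _|_].
  by have [_ <-] := hf t (or_introl erefl); rewrite e; apply/ssrnat.leP.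
by rewrite Rplus_0_l => /ih; apply=> u hu; apply: hf; right.
Qed.

Lemma exists_nonneg_coefs_ppow_pmul n df dg f g :
  is_form n df f -> is_form n dg g -> nonconstant n f -> strictly_pos_coefs n df f ->
  (forall x, in_Rplus_nonzero n x -> Rlt 0 (eval g x)) ->
  exists m, (1 <= m)%coq_nat /\ nonneg_coefs (pmul (ppow n f m) g).
Proof.
move=> hf hg hnc hs hpos; have [hn hdf] := nonconstant_form_gt0 hf hnc.
have [eps [heps hbd]] := SimplexLowerBound.eval_simplex_lower_bound _ _ (ssrnat.ltP hn) hpos.
have hg' := rpoly_wf_form hg.
have [|m [hm hnn]] := nneg_exprM_of_polya hdf (homog_mpoly_of hf) (homog_mpoly_of hg)
  (mcoeff_mpoly_of_gt0 hf hs).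
  have heps' : 0 < eps by apply/RltP.
  exact: polya_positive_coefs (homog_mpoly_of hg) heps' (meval_simplex_lower_bound hg' hbd).
exists m; split; first exact/ssrnat.leP.
have hwf := rpoly_wf_pmul (rpoly_wf_ppow (m := m) (rpoly_wf_form hf)) hg'.
move=> w; rewrite (coef_mpoly_of _ hwf) mpoly_of_pmul mpoly_of_ppow.
by case: ifP => _; [apply/RleP/hnn | apply: Rle_refl].
Qed.

End PolyaDomination.

Theorem lemma5p1 (n df dg : nat) (f g : rpoly) :
  is_form n df f -> is_form n dg g ->
  nonconstant n f ->
  strictly_pos_coefs n df f ->
  (forall x, in_Rplus_nonzero n x -> 0 < eval g x) ->
  Nat.divide df dg ->
  exists m : nat, (1 <= m)%nat /\ nonneg_coefs (pmul (ppow n f m) g).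
Proof.
intros hf hg hnc hs hpos _.
exact (PolyaDomination.exists_nonneg_coefs_ppow_pmul hf hg hnc hs hpos).
Qed.
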